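(* Let $p,q$ be positive integers with $p/q\ge4$, $k=\lfloor p/q\rfloor$, $r=p-kq\ge1$, and $t$ the smallest positive integer with $(t+1)q\equiv r\pmod p$. Let $G$ be a graph and $f,g$ two $k$-colourings of $G$ with colours $\{0,\dots,k-1\}$, and let $(G',\alpha,\beta)$ be constructed from $(G,f,g)$ as described in the context. If $\alpha$ reconfigures to $\beta$ (as $(p,q)$-colourings of $G'$), then $f$ reconfigures to $g$ (as $k$-colourings of $G$).
   Context: Intervals $[a,b]=\{a,a+1,\dots,b\}$ are taken modulo $p$. A $(p,q)$-colouring is a map to $\{0,\dots,p-1\}$ with $q\le|\psi(x)-\psi(y)|\le p-q$ on every edge; a $k$-colouring is a proper colouring with colours $\{0,\dots,k-1\}$; in either setting, $a$ reconfigures to $b$ if there is a sequence of such colourings from $a$ to $b$ with consecutive ones differing on at most one vertex. Let $\gamma(0)=0$ and $\gamma(i)=iq+r$ for $1\le i\le k-1$. Construction of $G'$: start from $G$; add a disjoint copy of the circular clique on vertices $y_0,\dots,y_{p-1}$ ($y_iy_j$ an edge iff $q\le|i-j|\le p-q$); for every edge $uv$ of $G$ add two new paths $P_{uv}=u\,x_0^{uv}\cdots x_t^{uv}\,v$ and $P_{vu}=v\,x_0^{vu}\cdots x_t^{vu}\,u$, internally disjoint from everything else and each other; join $x_0^{ab}$ and $x_t^{ab}$ to all $y_j$ with $j\in[3q-1,p-q-1]$, and join $x_i^{ab}$ ($1\le i\le t-1$) to all $y_j$ with $j\in[(i+3)q-1,(i-1)q]$. Colouring $\alpha$: $\alpha(w)=\gamma(f(w))$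 for $w\in V(G)$; $\alpha(y_i)=i$; for each path $P_{ab}$ (over both orderings of each edge of $G$): if $\alpha(a)=0$, set $\alpha(x_i^{ab})=(i+1)q\bmod p$ for $0\le i\le t$; if $\alpha(b)=0$, set $\alpha(x_i^{ab})=iq\bmod p$ for $0\le i\le t-1$ and $\alpha(x_t^{ab})=q$; if $\alpha(a)\ne0\ne\alpha(b)$, set $\alpha(x_i^{ab})=iq\bmod p$ for $0\le i\le t-1$ and $\alpha(x_t^{ab})=0$. The colouring $\beta$ is defined in the same way from $g$. *)

From mathcomp Require Import all_boot.
Set Implicit Arguments. Unset Strict Implicit. Unset Printing Implicit Defensive.

Definition ndist (a b : nat) : nat := maxn a b - minn a b.

(* j lies in the modular interval [a, b] = {a, a+1, ..., b} taken modulo p *)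
Definition in_mod_interval (p a b j : nat) : bool :=
  ((j + p - a %% p) %% p) <= ((b %% p + p - a %% p) %% p).

Definition k_colouring (T : Type) (k : nat) (E : rel T) (c : T -> nat) : Prop :=
  (forall x, c x < k) /\ (forall x y, E x y -> c x != c y).

Definition pq_colouring (T : Type) (p q : nat) (E : rel T) (c : T -> nat) : Prop :=
  (forall x, c x < p) /\
  (forall x y, E x y -> (q <= ndist (c x) (c y)) && (ndist (c x) (c y) <= p - q)).

Definition reconfigures (T : Type) (ok : (T -> nat) -> Prop) (a b : T -> nat) : Prop :=
  exists (n : nat) (c : nat -> T -> nat),
    (forall x, c 0 x = a x) /\ (forall x, c n x = b x) /\
    (forall i, i <= n -> ok (c i)) /\
    (forall i, i < n -> forall w w', c i w <> c i.+1 w -> c i w' <> c i.+1 w' -> w = w').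

(* internal path vertices x_i^{ab}, for ordered pairs (a,b) with ab an edge, 0 <= i <= t *)
Definition pathvert (V : finType) (e : rel V) (t : nat) :=
  {x : V * V * 'I_t.+1 | e x.1.1 x.1.2}.

(* vertex set of G' : V(G) + {y_0..y_{p-1}} + path vertices *)
Definition Gvert (V : finType) (e : rel V) (p t : nat) :=
  ((V + 'I_p) + pathvert e t)%type.

Definition Gadj0 (V : finType) (e : rel V) (p q t : nat)
  (u w : Gvert e p t) : bool :=
  match u, w with
  | inl (inl a), inl (inl b) => e a b
  | inl (inr i), inl (inr j) => (q <= ndist i j) && (ndist i j <= p - q)
  | inr x, inl (inl v) =>
      let: (a, b, i) := val x in
      ((nat_of_ord i == 0) && (v == a)) || ((nat_of_ord i == t) && (v == b))
  | inr x, inr x' =>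
      let: (a, b, i) := val x in
      let: (a', b', i') := val x' in
      [&& a == a', b == b' & nat_of_ord i' == (nat_of_ord i).+1]
  | inr x, inl (inr j) =>
      let: (a, b, i) := val x in
      if (nat_of_ord i == 0) || (nat_of_ord i == t) then
        in_mod_interval p (3 * q - 1) (p - q - 1) j
      else
        in_mod_interval p ((i + 3) * q - 1) ((i - 1) * q) j
  | _, _ => false
  end.

Definition Gadj (V : finType) (e : rel V) (p q t : nat) : rel (Gvert e p t) :=
  fun u w => Gadj0 q u w || Gadj0 q w u.

Definition gamma (q r i : nat) : nat := if i == 0 then 0 else i * q + r.

(* the colouring alpha (resp. beta) of G' built from a k-colouring col of G *)
Definition liftcol (V : finType) (e : rel V) (p q r t : nat) (col : V -> nat)
  (w : Gvert e p t) : nat :=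
  match w with
  | inl (inl v) => gamma q r (col v)
  | inl (inr i) => nat_of_ord i
  | inr x =>
      let: (a, b, i) := val x in
      if gamma q r (col a) == 0 then ((i + 1) * q) %% p
      else if gamma q r (col b) == 0 then
        (if nat_of_ord i == t then q else (i * q) %% p)
      else (if nat_of_ord i == t then 0 else (i * q) %% p)
  end.

From mathcomp Require Import all_boot zify.

(* Each colour c of G is read back as (c - r) %/ q, the left inverse of gamma; this
   turns a recolouring sequence of G' into one of G, and only properness needs work.
   The clique y_0 .. y_(p-1) is never recoloured: a single moving clique vertex is
   pinned by all the others.  With the clique fixed, the neighbourhoods of the path
   vertices force x_i^uv into the colours [iq, iq + 2q) mod p.  If u has colour
   below r and v a colour in [u + q, q + r), then propagating along P_uv pushes the
   colour of x_(t-1) to r - 2q + [q, 2q) mod p, since (t-1)q = r - 2q mod p, while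
   the edge x_t v forces x_t into that same window, too close to x_(t-1).  Two adjacent
   vertices with colours >= r are at least q apart, hence read back differently. *)

Set Implicit Arguments. Unset Strict Implicit. Unset Printing Implicit Defensive.

Section Reconfiguration.
Variables (T : Type) (ok : (T -> nat) -> Prop).

Lemma reconfigures_invariant (P : (T -> nat) -> Prop) a b :
  (forall c, (forall x, c x = a x) -> P c) ->
  (forall c c', P c -> ok c' ->
     (forall w w', c w <> c' w -> c w' <> c' w' -> w = w') -> P c') ->
  reconfigures ok a b -> reconfigures (fun c => ok c /\ P c) a b.
Proof.
move=> Pa Pstep [n [c [c0 [cn [cok cstep]]]]].
have cP i : i <= n -> P (c i).
  elim: i => [_|i IH lt_in]; first exact: Pa.
  exact: Pstep (IH (ltnW lt_in)) (cok _ lt_in) (cstep _ lt_in).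
by exists n, c; split=> //; split=> //; split=> // i le_in; split; [exact: cok | exact: cP].
Qed.

Lemma reconfigures_comap (U : Type) (okU : (U -> nat) -> Prop)
    (emb : U -> T) (F : nat -> nat) a b a' b' :
  injective emb -> (forall c, ok c -> okU (fun u => F (c (emb u)))) ->
  (forall u, F (a (emb u)) = a' u) -> (forall u, F (b (emb u)) = b' u) ->
  reconfigures ok a b -> reconfigures okU a' b'.
Proof.
move=> emb_inj okF Fa Fb [n [c [c0 [cn [cok cstep]]]]].
exists n, (fun i u => F (c i (emb u))).
split; first by move=> u; rewrite c0.
split; first by move=> u; rewrite cn.
split; first by move=> i le_in; apply: okF; apply: cok.
move=> i lt_in u u' ne_u ne_u'; apply: emb_inj.
by apply: (cstep i lt_in) => E; [apply: ne_u | apply: ne_u']; rewrite E.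
Qed.

End Reconfiguration.

Definition circ_adj (p q a b : nat) : bool := (q <= ndist a b) && (ndist a b <= p - q).

Lemma modn_double p x : x < p + p -> x %% p = if x < p then x else x - p.
Proof.
move=> lt_x_2p; case: ltnP => [lt_xp|le_px]; first by rewrite modn_small.
by rewrite -{1}(subnK le_px) modnDr modn_small //; lia.
Qed.

Lemma circ_adj_rot p q o a b : a < p -> b < p ->
  circ_adj p q ((a + o) %% p) ((b + o) %% p) = circ_adj p q a b.
Proof.
move=> lt_ap lt_bp; rewrite -(modnDmr a) -(modnDmr b).
have : o %% p < p by rewrite ltn_mod; lia.
move: (o %% p) => o' lt_o'p.
rewrite !modn_double /circ_adj /ndist; try lia.
by do 2!case: ifP => ?; apply/idP/idP => /andP [? ?]; apply/andP; split; lia.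
Qed.

Lemma modnD_surj p o c : c < p -> exists2 s, s < p & c = (s + o) %% p.
Proof.
move=> lt_cp; have le_op : o %% p <= p by rewrite ltnW // ltn_mod; lia.
exists ((c + (p - o %% p)) %% p); first by rewrite ltn_mod; lia.
rewrite modnDml {2}(divn_eq o p).
have -> : c + (p - o %% p) + (o %/ p * p + o %% p) = o %/ p * p + c + p by lia.
by rewrite modnDr modnMDl modn_small.
Qed.

Lemma circ_adj_interval p q a b c : 0 < q -> a <= b ->
  (forall j, a <= j <= b -> circ_adj p q c j) -> (c + q <= a) || (b + q <= c).
Proof.
move=> q_gt0 le_ab adj_c.
have [le_ca|lt_ac] := leqP c a.
  by have := adj_c a; rewrite leqnn le_ab /circ_adj /ndist => /(_ isT); lia.
have [le_bc|lt_cb] := leqP b c.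
  by have := adj_c b; rewrite leqnn le_ab /circ_adj /ndist => /(_ isT); lia.
by have := adj_c c; rewrite /circ_adj /ndist maxnn minnn subnn => /(_ _); lia.
Qed.

Lemma in_mod_interval_shift p a b d e : d <= e -> e < p ->
  b %% p = (a + e) %% p -> in_mod_interval p a b ((a + d) %% p).
Proof.
move=> le_de lt_ep b_mod.
have offset x : x < p -> ((a + x) %% p + p - a %% p) %% p = x.
  move=> lt_xp; have le_ap : a %% p <= p by rewrite ltnW // ltn_mod; lia.
  rewrite -addnBA // modnDml {1}(divn_eq a p).
  have -> : a %/ p * p + a %% p + x + (p - a %% p) = a %/ p * p + x + p by lia.
  by rewrite modnDr modnMDl modn_small.
by rewrite /in_mod_interval b_mod !offset //; lia.
Qed.

Definition ungamma (q r c : nat) : nat := (c - r) %/ q.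

Lemma gammaK q r : 0 < q -> cancel (gamma q r) (ungamma q r).
Proof.
move=> q_gt0 [|i]; first by rewrite /ungamma /gamma sub0n div0n.
by rewrite /ungamma /gamma /= addnK mulnK.
Qed.

Lemma ungamma_lt q r k c : 0 < q -> 0 < k -> c < k * q + r -> ungamma q r c < k.
Proof.
move=> q_gt0 k_gt0 lt_c.
by rewrite /ungamma ltn_divLR //; lia.
Qed.

Lemma ungamma_gap q r m n : 0 < q -> r <= m -> m + q <= n ->
  ungamma q r m < ungamma q r n.
Proof.
move=> q_gt0 le_rm le_mn; rewrite /ungamma.
have -> : n - r = (n - r - q) + q by lia.
rewrite divnDr ?dvdnn // divnn q_gt0 addn1 ltnS leq_div2r //; lia.
Qed.

Section Gadget.
Variables (p q r t : nat) (V : finType) (e : rel V).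
Hypotheses (q_gt0 : 0 < q) (le_4q_p : 4 * q <= p).

Lemma p_gt0 : 0 < p. Proof. lia. Qed.

Definition gv (v : V) : Gvert e p t := inl (inl v).
Definition yv (j : nat) : Gvert e p t := inl (inr (Ordinal (ltn_pmod j p_gt0))).
Definition xv a b (ab : e a b) (i : nat) : Gvert e p t :=
  inr (exist (fun x : V * V * 'I_t.+1 => e x.1.1 x.1.2) (a, b, inord i) ab).

Lemma yv_ord (j : 'I_p) : yv j = inl (inr j).
Proof. by congr (inl (inr _)); apply: val_inj; rewrite /= modn_small. Qed.

Lemma adj_edge u v : e u v -> Gadj q (gv u) (gv v).
Proof. by move=> uv; apply/orP; left. Qed.

Lemma adj_path_start a b (ab : e a b) : Gadj q (gv a) (xv ab 0).
Proof. by apply/orP; right; rewrite /= inordK //= eqxx. Qed.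

Lemma adj_path_finish a b (ab : e a b) : Gadj q (xv ab t) (gv b).
Proof. by apply/orP; left; rewrite /= inordK // !eqxx orbT. Qed.

Lemma adj_path_next a b (ab : e a b) i : i < t -> Gadj q (xv ab i) (xv ab i.+1).
Proof. by move=> lt_it; apply/orP; left; rewrite /= !inordK ?eqxx //; lia. Qed.

Lemma adj_path_end_clique a b (ab : e a b) i j : (i == 0) || (i == t) ->
  3 * q - 1 <= j <= p - q - 1 -> Gadj q (xv ab i) (yv j).
Proof.
move=> end_i j_in; apply/orP; left.
rewrite /= inordK; last by case/orP: end_i => /eqP ->.
rewrite end_i (_ : j = 3 * q - 1 + (j - (3 * q - 1))); last lia.
by apply: (in_mod_interval_shift (e := p - 4 * q)); try congr (_ %% _); lia.
Qed.

Lemma adj_path_inner_clique a b (ab : e a b) i j : 0 < i < t ->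
  3 * q - 1 <= j <= p - q -> Gadj q (xv ab i) (yv (j + i * q)).
Proof.
move=> i_in j_in; apply/orP; left.
rewrite /= inordK; last lia.
have -> : (i == 0) || (i == t) = false by lia.
have le_q_iq : q <= i * q by rewrite leq_pmull; lia.
rewrite (_ : j + i * q = (i + 3) * q - 1 + (j - (3 * q - 1))); last by rewrite mulnDl; lia.
apply: (in_mod_interval_shift (e := p + 1 - 4 * q)); try lia.
by rewrite -(modnDr ((i - 1) * q) p); congr (_ %% _); rewrite mulnBl mulnDl; lia.
Qed.

Definition fixes_clique (c : Gvert e p t -> nat) : Prop :=
  forall j : 'I_p, c (inl (inr j)) = j.

Lemma fixes_clique_yv c j : fixes_clique c -> c (yv j) = j %% p.
Proof. by move=> fix_c; rewrite fix_c. Qed.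

Lemma fixes_clique_step (c c' : Gvert e p t -> nat) :
  fixes_clique c -> pq_colouring p q (@Gadj V e p q t) c' ->
  (forall w w', c w <> c' w -> c w' <> c' w' -> w = w') -> fixes_clique c'.
Proof.
move=> fix_c [c'_lt c'_adj] one_change j0.
have [//|moved] := eqVneq (c' (inl (inr j0))) j0.
have fix_yv j : yv j <> yv j0 -> c' (yv j) = j %% p.
  move=> ne_j; have [//|moved_j] := eqVneq (c' (yv j)) (j %% p).
  case: ne_j; apply: one_change.
    by rewrite fixes_clique_yv // => E; rewrite E eqxx in moved_j.
  by rewrite yv_ord fix_c => E; rewrite E eqxx in moved.
have [s lt_sp c'_j0] := modnD_surj j0 (c'_lt (inl (inr j0))).
suff : (s + q <= q) || (p - q + q <= s).
  by rewrite c'_j0 => s0; rewrite (_ : s = 0) ?add0n ?modn_small //; lia.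
apply: (circ_adj_interval (p := p)) => [//||j j_in]; first lia.
have lt_jp : j < p by lia.
have adj_j0 : circ_adj p q j0 ((j + j0) %% p).
  rewrite {1}(_ : (j0 : nat) = (0 + j0) %% p); last by rewrite add0n modn_small.
  by rewrite circ_adj_rot // /circ_adj /ndist; lia.
have ne_j : yv (j + j0) <> yv j0.
  move/(congr1 c); rewrite !fixes_clique_yv // (modn_small (ltn_ord j0)) => E.
  by move: adj_j0; rewrite E /circ_adj /ndist maxnn minnn subnn; lia.
have : circ_adj p q (c' (inl (inr j0))) (c' (yv (j + j0))).
  by apply: c'_adj; apply/orP; left; exact: adj_j0.
by rewrite (fix_yv _ ne_j) c'_j0 circ_adj_rot.
Qed.

Variable phi : Gvert e p t -> nat.
Hypotheses (phi_pq : pq_colouring p q (@Gadj V e p q t) phi)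
  (phi_clique : fixes_clique phi).

Lemma phi_adj u w : Gadj q u w -> circ_adj p q (phi u) (phi w).
Proof. exact: phi_pq.2. Qed.

Lemma path_end_colour a b (ab : e a b) i : (i == 0) || (i == t) ->
  (phi (xv ab i) < 2 * q) || (phi (xv ab i) == p - 1).
Proof.
move=> end_i; have := phi_pq.1 (xv ab i).
suff : (phi (xv ab i) + q <= 3 * q - 1) || (p - q - 1 + q <= phi (xv ab i)) by lia.
apply: (circ_adj_interval (p := p)) => [//||j j_in]; first lia.
by have := phi_adj (adj_path_end_clique ab end_i j_in); rewrite fixes_clique_yv // modn_small //; lia.
Qed.

Lemma path_inner_colour a b (ab : e a b) i : 0 < i < t ->
  exists2 s, s < 2 * q & phi (xv ab i) = (s + i * q) %% p.
Proof.
move=> i_in; have [s lt_sp phi_x] := modnD_surj (i * q) (phi_pq.1 (xv ab i)).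
exists s => //.
suff : (s + q <= 3 * q - 1) || (p - q + q <= s) by lia.
apply: (circ_adj_interval (p := p)) => [//||j j_in]; first lia.
have := phi_adj (adj_path_inner_clique ab i_in j_in).
by rewrite fixes_clique_yv // phi_x circ_adj_rot //; lia.
Qed.

Hypothesis lt_rq : r < q.

Lemma path_colour_chain u v (uv : e u v) : phi (gv u) < r ->
  forall i, i < t -> exists2 s, phi (gv u) + q <= s < 2 * q & phi (xv uv i) = (s + i * q) %% p.
Proof.
move=> lt_ur; elim=> [_|i IH lt_i1t].
  have x0_lt := phi_pq.1 (xv uv 0).
  exists (phi (xv uv 0)); last by rewrite mul0n addn0 modn_small.
  have := phi_adj (adj_path_start uv); have := path_end_colour uv (i := 0) isT.
  by rewrite /circ_adj /ndist; lia.
have [s s_in phi_xi] := IH (ltnW lt_i1t).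
have i1_in : 0 < i.+1 < t by lia.
have [s' lt_s'2q phi_xi1] := path_inner_colour uv i1_in.
exists s' => //.
have := phi_adj (adj_path_next uv (ltnW lt_i1t)).
by rewrite phi_xi phi_xi1 mulSn addnA circ_adj_rot /circ_adj /ndist; lia.
Qed.

Hypotheses (t_gt0 : 0 < t) (t_wrap : (t.+1 * q) %% p = r %% p).

Lemma predt_mulq_mod : (t.-1 * q) %% p = p + r - 2 * q.
Proof.
have : (t.-1 * q + 2 * q) %% p = r.
  by rewrite -mulnDl addn2 prednK // t_wrap modn_small //; lia.
rewrite -modnDml; have : t.-1 * q %% p < p by rewrite ltn_mod; lia.
move: (t.-1 * q %% p) => m lt_mp; rewrite modn_double; last lia.
by case: ifP; lia.
Qed.

Lemma no_short_edge u v (uv : e u v) : phi (gv u) < r ->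
  phi (gv u) + q <= phi (gv v) < q + r -> False.
Proof.
move=> lt_ur uv_close.
have lt_pt_t : t.-1 < t by rewrite prednK.
have xt_lt := phi_pq.1 (xv uv t).
have [X X_in phi_xt] : exists2 X, q <= X < 2 * q & phi (xv uv t) = (X + (p + r - 2 * q)) %% p.
  have := phi_adj (adj_path_finish uv); have := path_end_colour uv (i := t).
  rewrite eqxx orbT => /(_ isT) /orP [xt_low|/eqP ->] adj_xt_v.
    exists (phi (xv uv t) + 2 * q - r); first by move: adj_xt_v; rewrite /circ_adj /ndist; lia.
    by rewrite (_ : _ + _ = phi (xv uv t) + p) ?modnDr ?modn_small //; lia.
  by exists (2 * q - r - 1); [lia | rewrite modn_small; lia].
have [s s_in phi_xs] := path_colour_chain uv lt_ur lt_pt_t.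
have := phi_adj (adj_path_next uv lt_pt_t).
rewrite prednK // phi_xs phi_xt -modnDmr predt_mulq_mod; clear phi_xs phi_xt.
by rewrite circ_adj_rot /circ_adj /ndist; lia.
Qed.

Hypothesis e_sym : symmetric e.

Lemma ungamma_proper u v : e u v -> ungamma q r (phi (gv u)) != ungamma q r (phi (gv v)).
Proof.
wlog le_uv : u v / phi (gv u) <= phi (gv v).
  move=> wlog_le uv; have [le_uv|lt_vu] := leqP (phi (gv u)) (phi (gv v)).
    exact: wlog_le.
  by rewrite eq_sym wlog_le 1?e_sym // ltnW.
move=> uv; have := phi_adj (adj_edge uv); rewrite /circ_adj /ndist => adj_uv.
have [le_ru|lt_ur] := leqP r (phi (gv u)).
  by rewrite neq_ltn ungamma_gap //; lia.
have [lt_v|le_v] := ltnP (phi (gv v)) (q + r).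
  by case: (no_short_edge uv lt_ur); lia.
rewrite /ungamma (_ : phi (gv u) - r = 0) ?div0n 1?eq_sym -?lt0n ?divn_gt0 //; lia.
Qed.

End Gadget.

Theorem proposition3p3 (p q k r t : nat) (V : finType) (e : rel V) (f g : V -> nat) :
  0 < q -> 4 * q <= p ->
  k = p %/ q -> r = p - k * q -> 1 <= r ->
  0 < t -> (t.+1 * q) %% p = r %% p ->
  (forall s, 0 < s -> s < t -> (s.+1 * q) %% p != r %% p) ->
  symmetric e -> irreflexive e ->
  k_colouring k e f -> k_colouring k e g ->
  reconfigures (pq_colouring p q (@Gadj V e p q t))
    (@liftcol V e p q r t f) (@liftcol V e p q r t g) ->
  reconfigures (k_colouring k e) f g.
Proof.
move=> q_gt0 le_4q_p def_k def_r _ t_gt0 t_wrap _ e_sym _ _ _ alpha_to_beta.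
have r_mod : r = p %% q by rewrite def_r def_k {1}(divn_eq p q) addKn.
have def_p : p = k * q + r by rewrite r_mod def_k -divn_eq.
have lt_rq : r < q by rewrite r_mod ltn_mod.
have k_gt0 : 0 < k by rewrite def_k divn_gt0 //; lia.
have alpha_to_beta_fixed := reconfigures_invariant (P := @fixes_clique p t V e)
  (fun c c_alpha j => c_alpha (inl (inr j)))
  (fun c c' c_clique c'_pq => fixes_clique_step q_gt0 le_4q_p c_clique c'_pq) alpha_to_beta.
apply: (reconfigures_comap (emb := gv p t e) (F := ungamma q r)) alpha_to_beta_fixed.
- by move=> u v [].
- move=> c [c_pq c_clique]; split => [u | u v uv].
    by apply: ungamma_lt => //; rewrite -def_p; apply: c_pq.1.
  exact: ungamma_proper.
- by move=> u; rewrite gammaK.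
- by move=> u; rewrite gammaK.
Qed.
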